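(* Let $\mathbb{X}\subseteq\mathbb{P}^2$ be a $\Bbbk$-configuration of type $(1,2,\dots,s)$ with $s\ge2$. Then there are at most $s+1$ lines in $\mathbb{P}^2$ that contain $s$ points of $\mathbb{X}$.
   Context: $\Bbbk$ is an algebraically closed field. A $\Bbbk$-configuration of type $(d_1,\dots,d_s)$ is a finite set $\mathbb{X}\subseteq\mathbb{P}^2$ for which there exist integers $1\le d_1<\cdots<d_s$, subsets $\mathbb{X}_1,\dots,\mathbb{X}_s$ of $\mathbb{X}$ and distinct lines $\mathbb{L}_1,\dots,\mathbb{L}_s\subseteq\mathbb{P}^2$ such that (1) $\mathbb{X}=\bigcup_{i=1}^s\mathbb{X}_i$; (2) $|\mathbb{X}_i|=d_i$ and $\mathbb{X}_i\subseteq\mathbb{L}_i$ for each $i$; (3) for $1<i\le s$, $\mathbb{L}_i$ contains no point of $\mathbb{X}_j$ for any $j<i$. *)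

From HB Require Import structures.
From mathcomp Require Import all_boot all_order all_algebra.
Set Implicit Arguments. Unset Strict Implicit. Unset Printing Implicit Defensive.
Import GRing.Theory.
Local Open Scope ring_scope.

(* Points of P^2(k) are represented by nonzero row vectors in k^3 (homogeneous
   coordinates); two nonzero vectors represent the same point iff they span the
   same row space, i.e. (p == q)%MS.  Lines of P^2(k) are likewise represented by
   nonzero coefficient vectors L = (a,b,c), the line being {a x + b y + c z = 0};
   two lines coincide iff their coefficient vectors are proportional. *)

Definition same_pt (k : fieldType) (p q : 'rV[k]_3) : bool := (p == q)%MS.

Definition on_line (k : fieldType) (p L : 'rV[k]_3) : bool := p *m L^T == 0.

Definition proj_family (k : fieldType) (X : seq 'rV[k]_3) : Prop :=
  all (fun p => p != 0) X /\ pairwise (fun p q => ~~ same_pt p q) X.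

Definition npts_on (k : fieldType) (X : seq 'rV[k]_3) (L : 'rV[k]_3) : nat :=
  count (fun p => on_line p L) X.

(* X (a finite set of distinct points, given by representatives) is a
   k-configuration of type (d 0, ..., d (s-1)) = (d_1, ..., d_s). *)
Definition kconfig (k : fieldType) (X : seq 'rV[k]_3) (s : nat) (d : nat -> nat)
  : Prop :=
  [/\ (1 <= s)%N, (1 <= d 0)%N, (forall i, (i.+1 < s)%N -> (d i < d i.+1)%N) &
   exists (Xs : nat -> seq 'rV[k]_3) (Ls : nat -> 'rV[k]_3),
       (forall p, p \in X -> exists2 i, (i < s)%N & p \in Xs i) /\
       (forall i, (i < s)%N -> {subset Xs i <= X}) /\
       (forall i, (i < s)%N -> uniq (Xs i) /\ size (Xs i) = d i) /\
       (forall i, (i < s)%N -> all (fun p => on_line p (Ls i)) (Xs i)) /\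
       proj_family (mkseq Ls s) /\
       (forall i j, (i < s)%N -> (j < i)%N ->
          all (fun p => ~~ on_line p (Ls i)) (Xs j))].

From HB Require Import structures.
From mathcomp Require Import all_boot all_order all_algebra.
Set Implicit Arguments. Unset Strict Implicit. Unset Printing Implicit Defensive.
Import GRing.Theory.
Local Open Scope ring_scope.

(* Write X_1 = {p} and X_2 = {a, b}.  A line carrying s points of X, other than
   L_2, ..., L_s, meets each X_i in at most one point, since two points of X_i
   already span L_i; as the X_i cover X, it meets every one of them, so it passes
   through p and through a or b.  It is therefore the line pa or the line pb, and
   there are at most (s - 1) + 2 such lines. *)

Section Counting.
Variable T : eqType.
Implicit Types (P : pred T) (l : seq T).

Lemma pairwise_sym_in (r : rel T) l : symmetric r -> pairwise r l ->
  {in l &, forall x y, x != y -> r x y}.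
Proof.
move=> rC; elim: l => //= z l IHl /andP[/allP rz /IHl{}IHl] x y.
rewrite !in_cons => /predU1P[-> | xl] /predU1P[-> | yl]; rewrite ?eqxx //.
- by move=> _; apply: rz.
- by move=> _; rewrite rC; apply: rz.
- exact: IHl.
Qed.

Lemma count_le1 P l : uniq l -> {in l &, forall x y, P x -> P y -> x = y} ->
  (count P l <= 1)%N.
Proof.
move=> ul Pinj; rewrite -size_filter.
have : {in filter P l &, forall x y, x = y}.
  by move=> x y; rewrite !mem_filter => /andP[Px xl] /andP[Py yl]; apply: Pinj.
move: (filter_uniq P ul); case: (filter P l) => [|x [|y t]] //= /andP[x_yt _].
by move/(_ x y); rewrite !inE !eqxx orbT => /(_ isT isT) xy; rewrite xy inE eqxx in x_yt.
Qed.

Lemma count_le_sum_cover P l (ls : nat -> seq T) s : uniq l ->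
  (forall x, x \in l -> exists2 i, (i < s)%N & x \in ls i) ->
  (count P l <= \sum_(i < s) count P (ls i))%N.
Proof.
move=> ul cover.
have -> : (\sum_(i < s) count P (ls i) = count P (flatten (mkseq ls s)))%N.
  by rewrite count_flatten sumnE !big_map -(subn0 s) -/(index_iota 0 s) big_mkord subn0.
rewrite -!size_filter; apply: uniq_leq_size; first exact: filter_uniq.
move=> x; rewrite !mem_filter => /andP[-> /cover[i lt_is xi]] /=.
by apply/flattenP; exists (ls i) => //; apply: map_f; rewrite mem_iota.
Qed.

Lemma count_cover_eq_has P l (ls : nat -> seq T) s : uniq l ->
  (forall x, x \in l -> exists2 i, (i < s)%N & x \in ls i) ->
  (forall i, i < s -> count P (ls i) <= 1)%N -> count P l = s ->
  forall i, (i < s)%N -> has P (ls i).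
Proof.
move=> ul cover le1 cnt i lt_is; rewrite has_count lt0n; apply/negP => /eqP cnt0.
have := count_le_sum_cover P ul cover; rewrite cnt (bigD1 (Ordinal lt_is)) //= cnt0.
apply/negP; rewrite -ltnNge.
apply: (@leq_ltn_trans (\sum_(j < s | j != Ordinal lt_is) 1)).
  by apply: leq_sum => j _; apply: le1.
by rewrite sum1_card cardC1 card_ord prednK // (leq_ltn_trans _ lt_is).
Qed.

End Counting.

Section ProjectivePlane.
Variable k : fieldType.
Implicit Types (p q a b L M : 'rV[k]_3) (X Ls Ms : seq 'rV[k]_3).

Lemma same_pt_refl : reflexive (@same_pt k).
Proof. by move=> p; apply/eqmxP. Qed.

Lemma same_ptC : symmetric (@same_pt k).
Proof. by move=> p q; apply/eqmxP/eqmxP => /eqmx_sym. Qed.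

Lemma same_pt_trans q p r : same_pt p q -> same_pt q r -> same_pt p r.
Proof. by move=> /eqmxP pq /eqmxP qr; apply/eqmxP; apply: eqmx_trans qr. Qed.

Lemma on_line_same_pt p q L : same_pt p q -> on_line p L = on_line q L.
Proof. by move=> /eqmxP pq; rewrite /on_line (eqmx_eq0 (eqmxMr _ pq)). Qed.

Lemma rank_col_mx_rV2 p q : p != 0 -> q != 0 -> ~~ same_pt p q ->
  \rank (col_mx p q) = 2%N.
Proof.
move=> p0 q0 npq; rewrite -addsmxE.
have rk_p : \rank p = 1%N by rewrite rank_rV p0.
have rk_q : \rank q = 1%N by rewrite rank_rV q0.
have [rk_pq_ge rk_pq_eq] := mxrank_leqif_sup (addsmxSl p q).
have rk_pq_le : (\rank (p + q)%MS <= 2)%N.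
  by have := (mxrank_adds_leqif p q).1; rewrite rk_p rk_q.
have rk_pq_neq1 : \rank (p + q)%MS != 1%N.
  apply: contra npq => /eqP rk_pq1.
  have /(submx_trans (addsmxSr p q)) qp : (p + q <= p)%MS.
    by rewrite -rk_pq_eq rk_p rk_pq1.
  by rewrite same_ptC /same_pt -(mxrank_leqif_eq qp).2 rk_p rk_q.
move: rk_pq_ge rk_pq_le rk_pq_neq1; rewrite rk_p.
by case: (\rank _) => [|[|[|r]]].
Qed.

(* Two distinct points span a plane of k^3, whose orthogonal is the one line through them. *)
Lemma unique_line_through2 p q L M : p != 0 -> q != 0 -> ~~ same_pt p q ->
  L != 0 -> M != 0 -> on_line p L -> on_line q L -> on_line p M -> on_line q M ->
  same_pt L M.
Proof.
move=> p0 q0 npq L0 M0 pL qL pM qM.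
set K := kermx (col_mx p q)^T.
have rk_K : \rank K = 1%N by rewrite mxrank_ker mxrank_tr rank_col_mx_rV2.
have eqK N : N != 0 -> on_line p N -> on_line q N -> (N == K)%MS.
  move=> N0 /eqP pN /eqP qN.
  have NK : (N <= K)%MS.
    by apply/sub_kermxP; rewrite -[N]trmxK -trmx_mul mul_col_mx pN qN col_mx0 trmx0.
  by rewrite -(mxrank_leqif_eq NK).2 rank_rV N0 rk_K.
have /eqmxP LK := eqK L L0 pL qL; have /eqmxP MK := eqK M M0 pM qM.
by apply/eqmxP; apply: eqmx_trans LK (eqmx_sym MK).
Qed.

Lemma proj_family_uniq X : proj_family X -> uniq X.
Proof. by case=> _; apply: pairwise_uniq => p; rewrite same_pt_refl. Qed.

Lemma proj_family_inj X : proj_family X -> {in X &, forall p q, same_pt p q -> p = q}.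
Proof.
case=> _ X_pw p q pX qX; apply: contraTeq => pq.
by apply: (pairwise_sym_in _ X_pw) => // x y; rewrite same_ptC.
Qed.

Lemma count_on_line_le1 X L M :
  {in X, forall p, p != 0} -> {in X &, forall p q, same_pt p q -> p = q} ->
  uniq X -> L != 0 -> M != 0 -> ~~ same_pt M L -> all (fun p => on_line p L) X ->
  (count (fun p => on_line p M) X <= 1)%N.
Proof.
move=> X0 X_inj uX L0 M0 nML /allP XL; apply: count_le1 => // p q pX qX pM qM.
apply: contraNeq nML => pq; apply: (unique_line_through2 (X0 p pX) (X0 q qX)) => //.
- by apply: contra pq => /(X_inj _ _ pX qX)/eqP.
- exact: XL.
- exact: XL.
Qed.

Lemma size_proj_family_le_cover Ls Ms : proj_family Ls ->
  {in Ls, forall M, has (same_pt M) Ms} -> (size Ls <= size Ms)%N.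
Proof.
move=> Ls_fam covered; pose f M := find (same_pt M) Ms.
rewrite -(size_map f) -(size_iota 0 (size Ms)); apply: uniq_leq_size.
  rewrite map_inj_in_uniq ?proj_family_uniq // => M N ML NL fMN.
  apply: (proj_family_inj Ls_fam) => //; apply: same_pt_trans (nth_find 0 (covered M ML)) _.
  by rewrite same_ptC [find _ _]fMN; apply: nth_find; apply: covered.
by move=> _ /mapP[M ML ->]; rewrite mem_iota /= -has_find; apply: covered.
Qed.

Lemma size_lines_through_pt_pair p a b Ls :
  p != 0 -> a != 0 -> b != 0 -> ~~ same_pt p a -> ~~ same_pt p b -> proj_family Ls ->
  {in Ls, forall M, on_line p M && (on_line a M || on_line b M)} -> (size Ls <= 2)%N.
Proof.
move=> p0 a0 b0 npa npb Ls_fam through.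
rewrite -(size_map (on_line a)); apply: (@uniq_leq_size _ _ [:: true; false]); last by case.
rewrite map_inj_in_uniq ?proj_family_uniq // => M N ML NL aMN.
have [/allP Ls0 _] := Ls_fam.
have /andP[pM abM] := through M ML; have /andP[pN abN] := through N NL.
have [M0 N0] := (Ls0 M ML, Ls0 N NL).
apply: (proj_family_inj Ls_fam) => //; case: (boolP (on_line a M)) => aM.
  by apply: (unique_line_through2 p0 a0 npa) => //; rewrite -aMN.
have bM : on_line b M by rewrite (negbTE aM) in abM.
have bN : on_line b N by rewrite -aMN (negbTE aM) in abN.
exact: (unique_line_through2 p0 b0 npb).
Qed.

Lemma proj_family_filter (P : pred 'rV[k]_3) Ls :
  proj_family Ls -> proj_family (filter P Ls).
Proof.
case=> /allP Ls0 Ls_pw; split; last exact: pairwise_filter.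
by apply/allP => M; rewrite mem_filter => /andP[_ /Ls0].
Qed.

End ProjectivePlane.

(* Indices start at 0: [Xs i] and [Lc i] are the paper's X_{i+1} and L_{i+1}. *)
Section KConfiguration.
Variables (k : fieldType) (X : seq 'rV[k]_3) (s : nat).
Variables (Xs : nat -> seq 'rV[k]_3) (Lc : nat -> 'rV[k]_3).
Hypothesis s_gt1 : (1 < s)%N.
Hypothesis X_fam : proj_family X.
Hypothesis X_cover : forall p, p \in X -> exists2 i, (i < s)%N & p \in Xs i.
Hypothesis Xs_sub : forall i, (i < s)%N -> {subset Xs i <= X}.
Hypothesis Xs_shape : forall i, (i < s)%N -> uniq (Xs i) /\ size (Xs i) = i.+1.
Hypothesis Xs_on_Lc : forall i, (i < s)%N -> all (fun p => on_line p (Lc i)) (Xs i).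
Hypothesis Lc_neq0 : all (fun L => L != 0) (mkseq Lc s).
Hypothesis Lc_avoid : forall i j, (i < s)%N -> (j < i)%N ->
  all (fun p => ~~ on_line p (Lc i)) (Xs j).

Definition block_line (M : 'rV[k]_3) : bool :=
  has (same_pt M) [seq Lc i | i <- iota 1 s.-1].

Lemma count_block_lines_le Ls : proj_family Ls -> (count block_line Ls <= s.-1)%N.
Proof.
move=> Ls_fam; rewrite -size_filter -(size_iota 1 s.-1) -(size_map Lc).
apply: size_proj_family_le_cover; first exact: proj_family_filter.
by move=> M; rewrite mem_filter => /andP[].
Qed.

Lemma full_line_meets_blocks M : M != 0 -> npts_on X M = s -> ~~ block_line M ->
  forall i, (i < s)%N -> has (fun p => on_line p M) (Xs i).
Proof.
move=> M0 full /hasPn not_block.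
apply: count_cover_eq_has (proj_family_uniq X_fam) X_cover _ full.
move=> [|i] lt_is; first exact: leq_trans (count_size _ _) (eq_leq (Xs_shape lt_is).2).
apply: (@count_on_line_le1 _ _ (Lc i.+1) M).
- by case: X_fam => /allP X0 _ p /(Xs_sub lt_is) /X0.
- by move=> p q /(Xs_sub lt_is) pX /(Xs_sub lt_is) qX; apply: (proj_family_inj X_fam).
- exact: (Xs_shape lt_is).1.
- by apply: (allP Lc_neq0); apply: map_f; rewrite mem_iota.
- exact: M0.
- by apply: not_block; rewrite map_f // mem_iota add1n prednK // ltnW.
- exact: Xs_on_Lc.
Qed.

Lemma first_blocks : exists p a b, Xs 0 = [:: p] /\ Xs 1 = [:: a; b].
Proof.
have [[_ size0] [_ size1]] := (Xs_shape (ltnW s_gt1), Xs_shape s_gt1).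
move: size0 size1; case: (Xs 0) => [|p []] // _; case: (Xs 1) => [|a [|b []]] // _.
by exists p, a, b.
Qed.

Lemma count_full_nonblock_lines_le2 Ls : proj_family Ls ->
  {in Ls, forall M, npts_on X M = s} -> (count (predC block_line) Ls <= 2)%N.
Proof.
move=> Ls_fam Ls_full; have [p [a [b [Xs0 Xs1]]]] := first_blocks.
have [/allP X0 _] := X_fam.
have pX : p \in X by apply: (Xs_sub (ltnW s_gt1)); rewrite Xs0 mem_head.
have [aX bX] : a \in X /\ b \in X by split; apply: (Xs_sub s_gt1); rewrite Xs1 !inE eqxx ?orbT.
have p_off_L1 : ~~ on_line p (Lc 1) by have := Lc_avoid s_gt1 (ltnSn 0); rewrite Xs0 /= andbT.
have := Xs_on_Lc s_gt1; rewrite Xs1 /= => /and3P[aL1 bL1 _].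
have npa : ~~ same_pt p a by apply: contra p_off_L1 => /on_line_same_pt ->.
have npb : ~~ same_pt p b by apply: contra p_off_L1 => /on_line_same_pt ->.
rewrite -size_filter.
apply: (size_lines_through_pt_pair (X0 p pX) (X0 a aX) (X0 b bX) npa npb).
  exact: proj_family_filter.
move=> M; rewrite mem_filter => /andP[nonblock ML].
have M0 : M != 0 by case: Ls_fam => /allP Ls0 _; apply: Ls0.
have meets := full_line_meets_blocks M0 (Ls_full M ML) nonblock.
by have := meets 0 (ltnW s_gt1); have := meets 1 s_gt1; rewrite Xs0 Xs1 /= !orbF => -> ->.
Qed.

Lemma size_full_lines_le Ls : proj_family Ls ->
  {in Ls, forall M, npts_on X M = s} -> (size Ls <= s.+1)%N.
Proof.
move=> Ls_fam Ls_full; rewrite -(count_predC block_line).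
apply: (@leq_trans (s.-1 + 2)); last by rewrite addn2 prednK // ltnW.
by rewrite leq_add ?count_block_lines_le ?count_full_nonblock_lines_le2.
Qed.

End KConfiguration.

Theorem corollary2p8 (k : closedFieldType) (s : nat) (X : seq 'rV[k]_3) :
  (2 <= s)%N ->
  proj_family X ->
  kconfig X s (fun i => i.+1) ->
  forall Ls : seq 'rV[k]_3,
    proj_family Ls ->
    all (fun L => npts_on X L == s) Ls ->
    (size Ls <= s.+1)%N.
Proof.
move=> s_gt1 X_fam [_ _ _ [Xs [Lc [X_cover [Xs_sub [Xs_shape [Xs_on_Lc
  [[Lc_neq0 _] Lc_avoid]]]]]]]].
move=> Ls Ls_fam /allP Ls_full.
apply: (size_full_lines_le s_gt1 X_fam X_cover Xs_sub Xs_shape Xs_on_Lc Lc_neq0 Lc_avoid Ls_fam).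
by move=> M /Ls_full/eqP.
Qed.
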